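(* Let $m$ divide $n$ and let $f\colon\{0,\dots,n-1\}^d\to\{0,1\}$ be $k$-monotone. Then there is an $m$-block function $h\colon\{0,\dots,n-1\}^d\to\{0,1\}$ such that $\mathrm{dist}(f,h)<kd/m$.
   Context: $\{0,\dots,n-1\}^d$ is ordered coordinatewise; $f$ is $k$-monotone if there is no chain $x_1\preceq\cdots\preceq x_{k+1}$ with $f(x_1)=1$ and $f(x_i)\neq f(x_{i+1})$ for all $i\in[k]$. $\mathrm{dist}(f,h)$ is the fraction of points where $f,h$ differ. The domain is partitioned into $m^d$ blocks: for $x\in\{0,\dots,m-1\}^d$, the block of $x$ is $\{(n/m)x+z : z\in\{0,\dots,n/m-1\}^d\}$. A function is an $m$-block function if it is constant on each block. *)

From mathcomp Require Import all_boot all_order all_algebra.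
Set Implicit Arguments. Unset Strict Implicit. Unset Printing Implicit Defensive.
Import Order.TTheory GRing.Theory Num.Theory.

Definition point (n d : nat) := {ffun 'I_d -> 'I_n}.

Definition ple n d (x y : point n d) : bool := [forall i, x i <= y i]%N.

Definition violating_chain n d (f : point n d -> bool) (k : nat) (s : seq (point n d)) : Prop :=
  size s = k.+1 /\
  (forall x0 : point n d, f (head x0 s) = true) /\
  (forall i, (i < k)%N -> forall x0 : point n d,
       ple (nth x0 s i) (nth x0 s i.+1) /\ f (nth x0 s i) != f (nth x0 s i.+1)).

Definition k_monotone n d (f : point n d -> bool) (k : nat) : Prop :=
  ~ exists s, violating_chain f k s.

Definition dist n d (f h : point n d -> bool) : rat :=
  (#|[set x : point n d | f x != h x]|%:R / (n ^ d)%:R)%R.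

Definition same_block n d (m : nat) (x y : point n d) : bool :=
  [forall i, (x i %/ (n %/ m) == y i %/ (n %/ m))%N].

Definition block_function n d (m : nat) (h : point n d -> bool) : Prop :=
  forall x y : point n d, same_block m x y -> h x = h y.

From mathcomp Require Import all_boot all_order all_algebra.
From mathcomp Require Import zify.
Import Order.TTheory GRing.Theory Num.Theory.

Set Implicit Arguments.
Unset Strict Implicit.
Unset Printing Implicit Defensive.

(* Let h be constant on each block, equal to the value of f at the lowest corner of the
   block, and write b = n/m for the side of a block.  A point is misclassified only in a
   block containing some w with f w <> f (corner); call such a block nonconstant.  The
   corner itself is never misclassified, so each nonconstant block contributes at most
   b^d - 1 errors.  The blocks form the grid [m]^d, which is covered by the d m^(d-1)
   diagonal lines {y + t(1,...,1)}.  If y_1, ..., y_s are nonconstant blocks on one line,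
   listed upwards, then corner y_1 <= w_1 <= corner y_2 <= w_2 <= ... is a chain with at
   least s value changes, so k-monotonicity forces s <= k.  Altogether f and h differ on
   at most k d m^(d-1) (b^d - 1) < k d n^d / m points. *)

Section Alternations.
Variables (T : Type) (leT : rel T) (f : T -> bool).
Hypothesis leT_tr : transitive leT.

Fixpoint alternations (x : T) (s : seq T) : nat :=
  if s is y :: s' then (f x != f y) + alternations y s' else 0.

Definition alternating_step (a b : T) : bool := leT a b && (f a != f b).

Lemma path_alternating_subseq x s :
  path leT x s -> exists2 t, path alternating_step x t & size t = alternations x s.
Proof.
elim: s x => [|y s IH] x /=; first by exists [::].
case/andP=> le_xy /IH[t path_t <-].
have [fxy | /negbNE/eqP fxy] := boolP (f x != f y).
  by exists (y :: t); rewrite //= /alternating_step le_xy fxy.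
exists t => //; case: t path_t => [|z t] //= /andP[/andP[le_yz fyz] ->].
by rewrite /alternating_step (leT_tr le_xy le_yz) fxy fyz.
Qed.

End Alternations.

Lemma ple_trans n d : transitive (@ple n d).
Proof.
move=> y x z /forallP le_xy /forallP le_yz; apply/forallP => i.
exact: leq_trans (le_xy i) (le_yz i).
Qed.

Section KMonotone.
Variables (n d k : nat) (f : point n d -> bool).
Hypothesis f_kmon : k_monotone f k.

Lemma alternating_path_size x t :
  path (alternating_step (@ple n d) f) x t -> f x -> size t < k.
Proof.
move=> path_t fx; rewrite ltnNge; apply/negP => k_le_t; apply: f_kmon.
exists (x :: take k t); split; first by rewrite /= size_takel.
split=> // i lt_ik x0.
have: path (alternating_step (@ple n d) f) x (take k t).
  by move: path_t; rewrite -{1}(cat_take_drop k t) cat_path => /andP[].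
by move/(pathP x0)/(_ i); rewrite size_takel // => /(_ lt_ik)/andP[].
Qed.

Lemma alternations_le x s : path (@ple n d) x s -> alternations f x s <= k.
Proof.
case/(path_alternating_subseq f (@ple_trans n d)) => t path_t <-.
case fx: (f x); first exact/ltnW/(alternating_path_size path_t).
case: t path_t => [|y t] //= /andP[/andP[_ fy] path_t].
by apply: alternating_path_size path_t _; rewrite fx eq_sym eqbF_neg negbK in fy.
Qed.

End KMonotone.

Definition strictly_below n d (x y : point n d) : bool := [forall i, x i < y i].

Section Blocks.
Variables (n m d : nat).
Hypotheses (m_gt0 : 0 < m) (n_gt0 : 0 < n) (m_dvd_n : m %| n).
Local Notation b := (n %/ m).

Lemma block_len_gt0 : 0 < b.
Proof. by rewrite divn_gt0 // dvdn_leq. Qed.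

Lemma block_len_mulE : n = m * b.
Proof. by rewrite mulnC divnK. Qed.

Lemma block_index_lt (x : point n d) i : x i %/ b < m.
Proof. by rewrite ltn_divLR ?block_len_gt0 // -block_len_mulE. Qed.

Lemma corner_lt (y : point m d) i : y i * b < n.
Proof. by rewrite [X in _ < X]block_len_mulE ltn_pmul2r ?block_len_gt0. Qed.

Definition block_of (x : point n d) : point m d :=
  [ffun i => Ordinal (block_index_lt x i)].
Definition corner (y : point m d) : point n d := [ffun i => Ordinal (corner_lt y i)].
Definition offset (x : point n d) : point b d :=
  [ffun i => Ordinal (ltn_pmod (x i) block_len_gt0)].
Definition zero_offset : point b d := [ffun=> Ordinal block_len_gt0].

Lemma block_ofE x i : block_of x i = x i %/ b :> nat.
Proof. by rewrite ffunE. Qed.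

Lemma cornerE y i : corner y i = y i * b :> nat.
Proof. by rewrite ffunE. Qed.

Lemma offsetE x i : offset x i = x i %% b :> nat.
Proof. by rewrite ffunE. Qed.

Lemma same_blockE x y : same_block m x y = (block_of x == block_of y).
Proof.
apply/forallP/eqP => [same_xy | same_xy i].
  by apply/ffunP => i; apply/val_inj; rewrite /= !block_ofE; apply/eqP.
by rewrite -!block_ofE same_xy.
Qed.

Lemma block_of_corner y : block_of (corner y) = y.
Proof.
by apply/ffunP => i; apply/val_inj; rewrite /= block_ofE cornerE mulnK ?block_len_gt0.
Qed.

Lemma corner_block_ple x : ple (corner (block_of x)) x.
Proof. by apply/forallP => i; rewrite cornerE block_ofE leq_divM. Qed.

Lemma ple_corner x y : strictly_below (block_of x) y -> ple x (corner y).
Proof.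
move=> /forallP lt_xy; apply/forallP => i; rewrite cornerE.
apply: leq_trans (ltnW (ltn_ceil (x i) block_len_gt0)) _.
by rewrite leq_mul2r -block_ofE lt_xy orbT.
Qed.

Lemma block_offset_inj : injective (fun x => (block_of x, offset x)).
Proof.
move=> x y [/ffunP same_block /ffunP same_offset].
apply/ffunP => i; apply/val_inj; rewrite /= (divn_eq (x i) b) (divn_eq (y i) b).
by rewrite -!block_ofE -!offsetE same_block same_offset.
Qed.

Lemma corner_block_zero_offset x : offset x = zero_offset -> corner (block_of x) = x.
Proof.
move=> zero_x; apply: block_offset_inj; congr pair; first exact: block_of_corner.
apply/ffunP => i; apply/val_inj.
by rewrite /= offsetE cornerE modnMl zero_x ffunE.
Qed.

End Blocks.

Section Diagonals.
Variables (m d' : nat).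
Local Notation d := d'.+1.

Definition diag_dir (y : point m d) : 'I_d := [arg min_(i < ord0) (y i : nat)].

Lemma diag_dir_min (y : point m d) i : y (diag_dir y) <= y i.
Proof. by rewrite /diag_dir; case: arg_minnP => // j _; apply. Qed.

Lemma diag_offset_lt (y : point m d) j : y (lift (diag_dir y) j) - y (diag_dir y) < m.
Proof. exact: leq_ltn_trans (leq_subr _ _) (ltn_ord _). Qed.

(* Blocks lie on a common line {y + t(1,...,1)} iff they have the same key: the coordinate
   where their minimum is attained and the excesses of the other coordinates over it. *)
Definition diag_key (y : point m d) : 'I_d * point m d' :=
  (diag_dir y, [ffun j => Ordinal (diag_offset_lt y j)]).

Lemma same_diagE K (y y' : point m d) : diag_key y = K -> diag_key y' = K ->
  forall i, y i + y' K.1 = y' i + y K.1.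
Proof.
move=> key_y key_y' i; rewrite -key_y /=.
have [same_dir /ffunP same_offset] : diag_key y = diag_key y' by rewrite key_y key_y'.
suff: y i - y (diag_dir y) = y' i - y' (diag_dir y).
  by have := diag_dir_min y i; have := diag_dir_min y' i; rewrite -same_dir; lia.
case: (unliftP (diag_dir y) i) => [j -> | ->]; last by rewrite !subnn.
by have := congr1 val (same_offset j); rewrite !ffunE /= -same_dir.
Qed.

Lemma card_diag_keys : #|{: 'I_d * point m d'}| = d * m ^ d'.
Proof. by rewrite card_prod card_ffun !card_ord. Qed.

End Diagonals.

Section NonconstantBlocks.
Variables (n m d' k : nat) (f : point n d'.+1 -> bool).
Hypotheses (f_kmon : k_monotone f k) (k_gt0 : 0 < k).
Hypotheses (m_gt0 : 0 < m) (n_gt0 : 0 < n) (m_dvd_n : m %| n).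
Local Notation d := d'.+1.
Local Notation b := (n %/ m).
Local Notation block_of := (block_of m_gt0 n_gt0 m_dvd_n).
Local Notation corner := (corner m_gt0 n_gt0 m_dvd_n).
Local Notation zero_offset := (@zero_offset n m d m_gt0 n_gt0 m_dvd_n).

Definition nonconstant_blocks : {set point m d} :=
  [set y | [exists x, (block_of x == y) && (f x != f (corner y))]].

Definition witness (y : point m d) : point n d :=
  odflt (corner y) [pick x | (block_of x == y) && (f x != f (corner y))].

Lemma witnessP y : y \in nonconstant_blocks ->
  block_of (witness y) = y /\ f (witness y) != f (corner y).
Proof.
rewrite inE /witness => /existsP[x Px]; case: pickP => [w /andP[/eqP -> ->] // | P0].
by rewrite P0 in Px.
Qed.

Definition corners_and_witnesses (ys : seq (point m d)) : seq (point n d) :=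
  flatten [seq [:: corner y; witness y] | y <- ys].

Lemma corners_and_witnesses_path y ys :
  all (mem nonconstant_blocks) (y :: ys) -> path (@strictly_below m d) y ys ->
  let s := witness y :: corners_and_witnesses ys in
  path (@ple n d) (corner y) s /\ size ys < alternations f (corner y) s.
Proof.
elim: ys y => [|y' ys IH] y /andP[NCy NCys] /=; case/witnessP: (NCy) => block_wy f_wy.
  by rewrite -{1}block_wy corner_block_ple eq_sym f_wy.
case/andP=> below_yy' path_ys; have [path_s alt_s] := IH y' NCys path_ys.
split; first by move: path_s; rewrite /= -{1}block_wy corner_block_ple ple_corner ?block_wy.
move: alt_s; rewrite /= [f (corner y) == _]eq_sym f_wy add1n ltnS => alt_s.
exact: leq_trans alt_s (leq_addl _ _).
Qed.

Lemma nonconstant_chain_size ys :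
  all (mem nonconstant_blocks) ys -> sorted (@strictly_below m d) ys -> size ys <= k.
Proof.
case: ys => [|y ys] // NCys /(corners_and_witnesses_path NCys)[path_s alt_s].
exact: leq_trans alt_s (alternations_le f_kmon path_s).
Qed.

Lemma card_nonconstant_chain (S : {set point m d}) (h : point m d -> nat) :
  S \subset nonconstant_blocks -> {in S &, injective h} ->
  {in S &, forall y y', h y < h y' -> strictly_below y y'} -> #|S| <= k.
Proof.
move=> /subsetP S_NC h_inj h_below.
pose ys := sort (relpre h leq) (enum S).
have ys_S : all (mem S) ys by apply/allP => y; rewrite mem_sort mem_enum.
have h_ys : sorted ltn (map h ys).
  rewrite ltn_sorted_uniq_leq map_inj_in_uniq ?sort_uniq ?enum_uniq.
    by rewrite sorted_map; apply: sort_sorted => y y'; apply: leq_total.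
  by move=> y y' /(allP ys_S) Sy /(allP ys_S) Sy'; apply: h_inj.
rewrite cardE -(size_sort (relpre h leq)); apply: nonconstant_chain_size.
  by apply/allP => y /(allP ys_S)/S_NC.
by rewrite sorted_map in h_ys; apply: (sub_in_sorted h_below) h_ys.
Qed.

Lemma card_nonconstant_diag K :
  #|[set y in nonconstant_blocks | diag_key y == K]| <= k.
Proof.
apply: (@card_nonconstant_chain _ (fun y => y K.1)).
- by apply/subsetP => y; rewrite inE => /andP[].
- move=> y y'; rewrite !inE => /andP[_ /eqP key_y] /andP[_ /eqP key_y'] /= same_h.
  apply/ffunP => i; apply/val_inj/eqP.
  by rewrite -(eqn_add2r (y' K.1)) (same_diagE key_y key_y') same_h.
- move=> y y'; rewrite !inE => /andP[_ /eqP key_y] /andP[_ /eqP key_y'] /= lt_h.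
  apply/forallP => i.
  by rewrite -(ltn_add2r (y' K.1)) (same_diagE key_y key_y') ltn_add2l.
Qed.

Lemma card_nonconstant_blocks : #|nonconstant_blocks| <= k * (d * m ^ d').
Proof.
rewrite -sum1_card (partition_big (@diag_key m d') predT) //= -card_diag_keys.
rewrite mulnC -sum_nat_const leq_sum // => K _; rewrite sum1_card.
apply: leq_trans (card_nonconstant_diag K); apply/eq_leq/eq_card => y.
by rewrite inE.
Qed.

Definition misclassified : {set point n d} := [set x | f x != f (corner (block_of x))].

Lemma card_misclassified : #|misclassified| <= #|nonconstant_blocks| * (b ^ d - 1).
Proof.
rewrite -(card_imset _ (@block_offset_inj _ _ _ m_gt0 n_gt0 m_dvd_n)).
have -> : b ^ d - 1 = #|[set~ zero_offset]|.
  by rewrite cardsC1 card_ffun !card_ord subn1.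
rewrite -cardsX; apply/subset_leq_card/subsetP => _ /imsetP[x + ->].
rewrite !inE => mis_x; apply/andP; split.
  by apply/existsP; exists x; rewrite eqxx mis_x.
by apply: contra mis_x => /eqP/corner_block_zero_offset ->.
Qed.

Lemma card_misclassified_mul_lt : #|misclassified| * m < k * d * n ^ d.
Proof.
have bd_gt0 : 0 < b ^ d by rewrite expn_gt0 block_len_gt0.
have md'_gt0 : 0 < m ^ d' by rewrite expn_gt0 m_gt0.
have := leq_trans card_misclassified (leq_mul card_nonconstant_blocks (leqnn (b ^ d - 1))).
rewrite [in n ^ d](block_len_mulE m_dvd_n) expnMn [m ^ d]expnS.
move: #|_| (b ^ d) (m ^ d') bd_gt0 md'_gt0 => E X Y X_gt0 Y_gt0 bound_E.
apply: leq_ltn_trans (leq_mul bound_E (leqnn m)) _.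
by rewrite -!mulnA ltn_pmul2l // ltn_pmul2l //; nia.
Qed.

End NonconstantBlocks.

Local Open Scope ring_scope.

Theorem lemma6p1 (n d m k : nat) (f : point n d -> bool) :
  (0 < m)%N -> (0 < d)%N -> (0 < k)%N -> (m %| n)%N ->
  k_monotone f k ->
  exists h : point n d -> bool,
    block_function m h /\ dist f h < ((k * d)%:R / m%:R : rat).
Proof.
move=> m_gt0; case: d f => [|d'] f // _ k_gt0 m_dvd_n f_kmon.
have bound_gt0 : 0 < ((k * d'.+1)%:R / m%:R : rat).
  by rewrite divr_gt0 ?ltr0n // muln_gt0 k_gt0.
have [n0 | n_gt0] := posnP n.
  subst n; exists f; split=> [x | ]; first by case: (x ord0).
  rewrite /dist (_ : [set x | f x != f x] = set0) ?cards0 ?mul0r //.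
  by apply/setP => x; rewrite !inE eqxx.
pose corner_of_block (x : point n d'.+1) :=
  corner m_gt0 n_gt0 m_dvd_n (block_of m_gt0 n_gt0 m_dvd_n x).
exists (fun x => f (corner_of_block x)); split.
  by move=> x y; rewrite same_blockE => /eqP same_xy; rewrite /corner_of_block same_xy.
rewrite /dist ltr_pdivrMr ?ltr0n ?expn_gt0 ?n_gt0 // mulrAC ltr_pdivlMr ?ltr0n //.
by rewrite -!natrM ltr_nat; apply: card_misclassified_mul_lt.
Qed.
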